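(* Let $n\ge2$ and define $\psi:\mathcal K_0^n\times[0,1]\to\mathcal K_0^n$ by $\psi(A,0)=A$ and $\psi(A,t)=(A+t\mathbb B)\cap\frac{1-t}{t}\mathbb B$ for $t\in(0,1]$. Then $\psi$ is continuous with respect to $d_{AW}$, and for every $t\in[\frac{\sqrt5-1}{2},1)$ and every $A\in\mathcal K_0^n$ one has $\psi(A,t)=\frac{1-t}{t}\mathbb B$.
   Context: $\mathbb B$ is the closed Euclidean unit ball of $\mathbb R^n$. $\mathcal K_0^n$ is the family of closed convex subsets of $\mathbb R^n$ containing $0$, with the Attouch–Wets metric $d_{AW}(A,K)=\sup_{j\in\mathbb N}\min\{\frac1j,\sup_{\|x\|<j}|d(x,A)-d(x,K)|\}$, $d(x,A)=\inf_{a\in A}\|x-a\|$. *)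

From HB Require Import structures.
From mathcomp Require Import all_boot all_order all_algebra.
From mathcomp Require Import all_classical all_reals all_analysis.
Set Implicit Arguments. Unset Strict Implicit. Unset Printing Implicit Defensive.
Import Order.TTheory GRing.Theory Num.Theory.
Import numFieldNormedType.Exports.
Local Open Scope classical_set_scope.
Local Open Scope ring_scope.

Section Defs.
Variables (R : realType) (n : nat).
Implicit Types (A K S : set 'rV[R]_n) (x : 'rV[R]_n).

Definition enorm x : R := Num.sqrt (\sum_(i < n) x ord0 i ^+ 2).

Definition eball : set 'rV[R]_n := [set x | enorm x <= 1].

Definition sscale (r : R) S : set 'rV[R]_n := [set r *: s | s in S].
Definition msum A K : set 'rV[R]_n :=
  [set z | exists a, A a /\ exists b, K b /\ z = a + b].

Definition convexset A : Prop :=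
  forall x y (t : R), A x -> A y -> 0 <= t <= 1 -> A (t *: x + (1 - t) *: y).

Definition K0 A : Prop := closed A /\ convexset A /\ A 0.

Definition edist x A : R := inf [set enorm (x - a) | a in A].

(** Attouch-Wets metric (j ranges over positive naturals j.+1). *)
Definition dAW A K : R :=
  sup [set Num.min (j.+1%:R)^-1
         (sup [set `|edist x A - edist x K| | x in [set x | enorm x < j.+1%:R]])
       | j in [set: nat]].

Definition psi A (t : R) : set 'rV[R]_n :=
  if t == 0 then A else msum A (sscale t eball) `&` sscale ((1 - t) / t) eball.

End Defs.

(* A + tB is the sublevel set {x | d(x, A) <= t} of the 1-Lipschitz function
   d(., A), so psi(A, t) is again closed, convex and contains 0.  Smallness of
   d_AW(A, B) amounts to a two-sided local excess bound: every point of A in a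
   large ball is close to a point of B, and conversely.  For t > 0 a point a + b
   of psi(A, t) is approximated by a' + (s/t) b with a' in B close to a, and then
   pulled radially into the ball of radius (1-s)/s; by convexity and 0 in B this
   stays in B + sB, and it moves little because (1-t)/t and (1-s)/s are close.
   Near t = 0, psi(B, s) lies in B + sB and contains every point of B in the
   large ball of radius (1-s)/s.  Finally (1-t)/t <= t exactly when t^2 + t >= 1,
   i.e. t >= (sqrt 5 - 1)/2, and then ((1-t)/t)B lies in tB, inside A + tB. *)

From Pilot Require Import Defs.
From HB Require Import structures.
From mathcomp Require Import all_boot all_order all_algebra.
From mathcomp Require Import all_classical all_reals all_analysis.
From mathcomp Require Import ring lra.
Import Order.TTheory GRing.Theory Num.Theory.
Import numFieldNormedType.Exports.
Local Open Scope classical_set_scope.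
Local Open Scope ring_scope.
Set Implicit Arguments.
Unset Strict Implicit.
Unset Printing Implicit Defensive.

Local Notation edist := Defs.edist.
Local Notation msum := Defs.msum.

Section EuclideanNorm.
Variables (R : realType) (n : nat).
Implicit Types (x y z : 'rV[R]_n) (a : R).

Definition sqnorm x : R := \sum_(i < n) x ord0 i ^+ 2.
Definition dotp x y : R := \sum_(i < n) x ord0 i * y ord0 i.

Lemma sqnorm_ge0 x : 0 <= sqnorm x.
Proof. by apply: sumr_ge0 => i _; rewrite sqr_ge0. Qed.

Lemma enorm_ge0 x : 0 <= enorm x.
Proof. exact: sqrtr_ge0. Qed.

Lemma enorm_sqr x : enorm x ^+ 2 = sqnorm x.
Proof. by rewrite /enorm sqr_sqrtr // sqnorm_ge0. Qed.

Lemma sqnormD x y : sqnorm (x + y) = sqnorm x + 2 * dotp x y + sqnorm y.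
Proof.
rewrite /sqnorm /dotp mulr_sumr -!big_split /=; apply: eq_bigr => i _.
by rewrite !mxE; ring.
Qed.

Lemma sqnorm_eq0 x : sqnorm x = 0 -> x = 0.
Proof.
move=> /eqP; rewrite psumr_eq0; last by move=> i _; rewrite sqr_ge0.
move=> /allP x0; apply/matrixP => i j; rewrite (ord1 i) mxE.
by apply/eqP; rewrite -sqrf_eq0; apply: x0; rewrite mem_index_enum.
Qed.

Lemma enorm_eq0 x : enorm x = 0 -> x = 0.
Proof. by move=> x0; apply: sqnorm_eq0; rewrite -enorm_sqr x0 expr0n. Qed.

Lemma enorm0 : enorm (0 : 'rV[R]_n) = 0.
Proof. by rewrite /enorm big1 ?sqrtr0 // => i _; rewrite mxE expr0n. Qed.

Lemma enormZ a x : enorm (a *: x) = `|a| * enorm x.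
Proof.
have sqnormZ : sqnorm (a *: x) = a ^+ 2 * sqnorm x.
  by rewrite /sqnorm mulr_sumr; apply: eq_bigr => i _; rewrite mxE exprMn.
by rewrite /enorm -/(sqnorm _) sqnormZ sqrtrM ?sqr_ge0 // sqrtr_sqr.
Qed.

Lemma enormN x : enorm (- x) = enorm x.
Proof. by rewrite -scaleN1r enormZ normrN normr1 mul1r. Qed.

Lemma enorm_distC x y : enorm (x - y) = enorm (y - x).
Proof. by rewrite -enormN opprB. Qed.

Lemma cauchy_schwarz x y : dotp x y <= enorm x * enorm y.
Proof.
have [nxy0|nxy0] := eqVneq (enorm x * enorm y) 0.
  rewrite nxy0; move/eqP: nxy0; rewrite mulf_eq0 => /orP[] /eqP /enorm_eq0 ->;
    by rewrite /dotp big1 // => i _; rewrite mxE ?mul0r ?mulr0.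
have nxy_gt0 : 0 < enorm x * enorm y by rewrite lt_def nxy0 mulr_ge0 ?enorm_ge0.
(* Lagrange's identity *)
have : 0 <= \sum_(i < n) (enorm y * x ord0 i - enorm x * y ord0 i) ^+ 2.
  by apply: sumr_ge0 => i _; rewrite sqr_ge0.
have -> : \sum_(i < n) (enorm y * x ord0 i - enorm x * y ord0 i) ^+ 2 =
    enorm y ^+ 2 * sqnorm x - 2 * (enorm x * enorm y) * dotp x y
    + enorm x ^+ 2 * sqnorm y.
  rewrite /sqnorm /dotp !mulr_sumr -sumrN -!big_split /=.
  by apply: eq_bigr => i _; ring.
rewrite -!enorm_sqr => h; nra.
Qed.

Lemma ler_enormD x y : enorm (x + y) <= enorm x + enorm y.
Proof.
rewrite -(ler_pXn2r (n:=2)) ?nnegrE ?addr_ge0 ?enorm_ge0 //.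
rewrite enorm_sqr sqnormD sqrrD !enorm_sqr; have := cauchy_schwarz x y; lra.
Qed.

Lemma ler_enorm_distD x y z : enorm (x - z) <= enorm (x - y) + enorm (y - z).
Proof. by rewrite -(subrKA y x (- z)); apply: ler_enormD. Qed.

End EuclideanNorm.

Lemma closed_sublevel (R : realType) (T : topologicalType) (f : T -> R) r :
  continuous f -> closed [set x | f x <= r].
Proof.
move=> fc; rewrite -[X in closed X]/(f @^-1` [set u | u <= r]).
by apply: preimage_closed; [move=> ? ?; exact: fc | exact: closed_le].
Qed.

Section EnormTopology.
Variables (R : realType) (n : nat).
Implicit Types (x y : 'rV[R]_n).

Lemma normr_coord_le_enorm x i : `|x ord0 i| <= enorm x.
Proof.
rewrite -(ler_pXn2r (n:=2)) ?nnegrE ?enorm_ge0 // enorm_sqr real_normK ?num_real //.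
by rewrite /sqnorm (bigD1 i) //= lerDl; apply: sumr_ge0 => j _; exact: sqr_ge0.
Qed.

Lemma mxnorm_le_enorm x : `|x| <= enorm x.
Proof.
rewrite [leLHS]/Num.norm /= mx_normrE; apply: bigmax_le; first exact: enorm_ge0.
by move=> [i j] _ /=; rewrite (ord1 i); exact: normr_coord_le_enorm.
Qed.

Lemma enorm_le_mxnorm x : enorm x <= n.+1%:R * `|x|.
Proof.
rewrite -(ler_pXn2r (n:=2)) ?nnegrE ?enorm_ge0 ?mulr_ge0 // enorm_sqr.
apply: (@le_trans _ _ (\sum_(i < n) `|x| ^+ 2)).
  apply: ler_sum => i _; rewrite -real_normK ?num_real // lerXn2r ?nnegrE //.
  rewrite [leRHS]/Num.norm /= mx_normrE; apply/bigmax_geP; right => /=.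
  by exists (ord0, i).
have n0 : 0 <= n%:R :> R by [].
by rewrite sumr_const card_ord -mulr_natr -natr1; nra.
Qed.

Lemma ler_enorm_distB x y : `|enorm x - enorm y| <= enorm (x - y).
Proof.
rewrite ler_norml; have := ler_enorm_distD x y 0; have := ler_enorm_distD y x 0.
by rewrite !subr0 enorm_distC => h1 h2; apply/andP; split; lra.
Qed.

Lemma continuous_of_enorm_lipschitz (g : 'rV[R]_n -> R) :
  (forall x y, `|g x - g y| <= enorm (x - y)) -> continuous g.
Proof.
move=> glip x; apply/(@cvgrPdist_lt _ _ _ (nbhs x) (nbhs_filter x)) => e e0.
have en0 : 0 < e / n.+1%:R by rewrite divr_gt0.
near=> y.
apply: le_lt_trans (glip x y) (le_lt_trans (enorm_le_mxnorm _) _).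
rewrite -ltr_pdivlMl // mulrC.
near: y.
exact: (@cvgr_dist_lt _ _ _ (nbhs x) (nbhs_filter x) id x (@cvg_id _ _) _ en0).
Unshelve. all: by end_near.
Qed.

Lemma closed_enorm_le (r : R) : closed [set x : 'rV[R]_n | enorm x <= r].
Proof.
by apply: closed_sublevel; apply: continuous_of_enorm_lipschitz; exact: ler_enorm_distB.
Qed.

End EnormTopology.

Section DistanceToSet.
Variables (R : realType) (n : nat).
Implicit Types (x y a : 'rV[R]_n) (A : set 'rV[R]_n).

Lemma edist_le x A a : A a -> edist x A <= enorm (x - a).
Proof.
move=> Aa; apply: ge_inf; last by exists a.
by exists 0 => _ [b _ <-]; exact: enorm_ge0.
Qed.

Lemma edist_ge0 x A : A !=set0 -> 0 <= edist x A.
Proof.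
move=> [a Aa]; apply: lb_le_inf; first by exists (enorm (x - a)), a.
by move=> _ [b _ <-]; exact: enorm_ge0.
Qed.

Lemma edist_approx x A (g : R) : A !=set0 -> 0 < g ->
  exists2 a, A a & enorm (x - a) < edist x A + g.
Proof.
move=> [a0 Aa0] g0.
have ne : [set enorm (x - a) | a in A] !=set0 by exists (enorm (x - a0)), a0.
have := @inf_lt _ _ (edist x A + g) ne; rewrite ltrDl => /(_ g0) [_ [a Aa <-]].
by exists a.
Qed.

Lemma edist_eq0 A a : A a -> edist a A = 0.
Proof.
move=> Aa; apply/eqP; rewrite eq_le edist_ge0; last by exists a.
by have := edist_le a Aa; rewrite subrr enorm0 => ->.
Qed.

Lemma edist_le_enorm x A : A 0 -> edist x A <= enorm x.
Proof. by move=> A0; have := edist_le x A0; rewrite subr0. Qed.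

Lemma edist_lipschitz x y A : A !=set0 ->
  edist x A <= edist y A + enorm (x - y).
Proof.
move=> [a0 Aa0]; rewrite -lerBlDr; apply: lb_le_inf.
  by exists (enorm (y - a0)), a0.
move=> _ [a Aa <-] /=.
by have := edist_le x Aa; have := ler_enorm_distD x y a; lra.
Qed.

Lemma edist_continuous A : A !=set0 -> continuous (fun x => edist x A).
Proof.
move=> A0; apply: continuous_of_enorm_lipschitz => x y; rewrite ler_norml.
have := edist_lipschitz x y A0; have := edist_lipschitz y x A0.
by rewrite enorm_distC => h1 h2; apply/andP; split; lra.
Qed.

Lemma edist_attained x A : closed A -> A !=set0 ->
  exists2 p, A p & enorm (x - p) = edist x A.
Proof.
move=> cA [a0 Aa0].
pose K := A `&` [set a | enorm (x - a) <= enorm (x - a0)].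
have distx_cont : continuous (fun a => enorm (x - a)).
  apply: continuous_of_enorm_lipschitz => a b.
  apply: le_trans (ler_enorm_distB _ _) _.
  by rewrite opprB addrC subrKA enorm_distC.
have cK : compact K.
  apply: bounded_closed_compact; last by apply: closedI => //; exact: closed_sublevel.
  apply: filterS (@nbhs_pinfty_ge _ (enorm x + enorm (x - a0)) (num_real _)).
  move=> M xM a [_ /= Ka]; apply: le_trans (mxnorm_le_enorm _) _.
  by have := ler_enorm_distD a x 0; rewrite !subr0 enorm_distC; lra.
have [p /[!inE] -[Ap Kp] p_min] :=
  EVT_min_rV (ex_intro _ a0 (conj Aa0 (lexx _))) cK (continuous_subspaceT distx_cont).
exists p => //; apply/eqP; rewrite eq_le edist_le //= andbT.
apply: lb_le_inf; first by exists (enorm (x - p)), p.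
move=> _ [a Aa <-]; have [Ka|/ltW] := leP (enorm (x - a)) (enorm (x - a0)).
  by apply: p_min; rewrite inE.
exact: le_trans.
Qed.

End DistanceToSet.

Section BallsAndPsi.
Variables (R : realType) (n : nat).
Implicit Types (x y : 'rV[R]_n) (A B : set 'rV[R]_n) (r s t : R).

Definition cball r : set 'rV[R]_n := [set x | enorm x <= r].

Lemma cball0 r : 0 <= r -> cball r 0.
Proof. by rewrite /cball /= enorm0. Qed.

Lemma sscale_eball r : 0 <= r -> sscale r (@eball R n) = cball r.
Proof.
move=> r0; apply/seteqP; split => x.
  by move=> [y /= y1 <-]; rewrite /cball /= enormZ ger0_norm // ler_piMr.
rewrite /cball /= => xr; have [r_eq0|r_neq0] := eqVneq r 0.
  have /enorm_eq0 -> : enorm x = 0.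
    by apply/eqP; rewrite eq_le -{1}r_eq0 xr enorm_ge0.
  by exists 0; [rewrite /eball /= enorm0 | rewrite scaler0].
exists (r^-1 *: x); last by rewrite scalerA divff // scale1r.
by rewrite /eball /= enormZ ger0_norm ?invr_ge0 // ler_pdivrMl ?mulr1 // lt_def r_neq0.
Qed.

Lemma msum_cball A t : closed A -> A !=set0 -> 0 <= t ->
  msum A (cball t) = [set z | edist z A <= t].
Proof.
move=> cA A0 t0; apply/seteqP; split => z.
  move=> [a [Aa [b [bt ->]]]] /=; apply: le_trans (edist_le _ Aa) _.
  by rewrite [a + b]addrC addrK.
move=> /= zt; have [p Ap pz] := edist_attained z cA A0.
exists p; split => //; exists (z - p).
by rewrite /cball /= pz addrC subrK.
Qed.

Lemma convex_cball r : convexset (cball r).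
Proof.
move=> x y l xr yr /andP[l0 l1]; rewrite /cball /= in xr yr *.
apply: le_trans (ler_enormD _ _) _; rewrite !enormZ !ger0_norm ?subr_ge0 //.
have l1' : 0 <= 1 - l by rewrite subr_ge0.
by have := ler_wpM2l l0 xr; have := ler_wpM2l l1' yr; lra.
Qed.

Lemma convexI A B : convexset A -> convexset B -> convexset (A `&` B).
Proof. by move=> cA cB x y l [? ?] [? ?] l01; split; [apply: cA | apply: cB]. Qed.

Lemma convex_msum A B : convexset A -> convexset B -> convexset (msum A B).
Proof.
move=> cA cB x y l [a [Aa [b [Bb ->]]]] [a' [Aa' [b' [Bb' ->]]]] l01.
exists (l *: a + (1 - l) *: a'); split; first exact: cA.
exists (l *: b + (1 - l) *: b'); split; first exact: cB.
by rewrite !scalerDr addrACA.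
Qed.

Lemma psi0 A : psi A 0 = A.
Proof. by rewrite /psi eqxx. Qed.

Lemma psi_pos A t : 0 < t -> t <= 1 ->
  psi A t = msum A (cball t) `&` cball ((1 - t) / t).
Proof.
move=> t0 t1; have r0 : 0 <= (1 - t) / t by rewrite divr_ge0 ?subr_ge0 // ltW.
by rewrite /psi (gt_eqF t0) !sscale_eball // ltW.
Qed.

Lemma K0_psi A t : K0 A -> 0 <= t <= 1 -> K0 (psi A t).
Proof.
move=> [cA [cvA A0]] /andP[t0 t1].
have [->|t_neq0] := eqVneq t 0; first by rewrite psi0.
have tp : 0 < t by rewrite lt_def t_neq0.
have r0 : 0 <= (1 - t) / t by rewrite divr_ge0 ?subr_ge0.
rewrite psi_pos //; split; [|split].
- apply: closedI; last exact: closed_enorm_le.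
  rewrite msum_cball //; last by exists 0.
  by apply: closed_sublevel; apply: edist_continuous; exists 0.
- by apply: convexI; [apply: convex_msum => //|]; exact: convex_cball.
- split; last exact: cball0.
  by exists 0; split => //; exists 0; split; [exact: cball0 | rewrite addr0].
Qed.

Lemma psi_eq_cball A t : A 0 -> 0 < t -> t <= 1 -> (1 - t) / t <= t ->
  psi A t = cball ((1 - t) / t).
Proof.
move=> A0 t0 t1 rt; rewrite psi_pos // setIidr // => x xr.
by exists 0; split => //; exists x; split; [exact: le_trans rt | rewrite add0r].
Qed.

End BallsAndPsi.

Section AttouchWets.
Variables (R : realType) (n : nat).
Implicit Types (x : 'rV[R]_n) (A K : set 'rV[R]_n).

Definition dist_gaps A K (j : nat) : set R :=
  [set `|edist x A - edist x K| | x in [set x | enorm x < j.+1%:R]].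

Lemma dAWE A K : dAW A K =
  sup [set Num.min (j.+1%:R)^-1 (sup (dist_gaps A K j)) | j in [set: nat]].
Proof. by []. Qed.

Lemma dAW_lt_of_gaps A K (J : nat) (e eps : R) :
  (J.+1%:R)^-1 < eps -> e < eps ->
  (forall x, enorm x < J.+1%:R -> `|edist x A - edist x K| <= e) ->
  dAW A K < eps.
Proof.
move=> J_eps e_eps gapsJ; apply: le_lt_trans (_ : _ <= Num.max e (J.+1%:R)^-1) _.
  rewrite dAWE; apply: ge_sup; first by eexists; exists 0%N.
  move=> _ [j _ <-]; rewrite le_max !ge_min; have [jJ|Jj] := leqP j J.
    apply/orP; left; apply/orP; right; apply: ge_sup.
      by exists (`|edist 0 A - edist 0 K|), 0 => //=; rewrite enorm0.
    move=> _ [x /= xj <-]; apply: gapsJ; apply: lt_le_trans xj _.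
    by rewrite ler_nat.
  by apply/orP; right; apply/orP; left; rewrite lef_pV2 ?posrE // ler_nat ltnW.
by rewrite gt_max e_eps.
Qed.

(* [sup] of a set without upper bound is a junk value; [A 0] and [K 0] bound
   the gaps by [2 (j + 1)]. *)
Lemma gap_lt_of_dAW A K (d : R) (j : nat) x : A 0 -> K 0 ->
  dAW A K < d -> d <= (j.+1%:R)^-1 -> enorm x < j.+1%:R ->
  `|edist x A - edist x K| < d.
Proof.
move=> A0 K0 AKd dj xj.
have gaps_sup : has_sup (dist_gaps A K j).
  split; first by exists (`|edist 0 A - edist 0 K|), 0 => //=; rewrite enorm0.
  exists (2 * j.+1%:R) => _ [y /= yj <-].
  have := edist_le_enorm y A0; have := edist_le_enorm y K0.
  have := edist_ge0 y (ex_intro _ _ A0); have := edist_ge0 y (ex_intro _ _ K0).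
  by rewrite ler_norml => *; apply/andP; split; lra.
have dAW_sup : has_sup [set Num.min (j.+1%:R)^-1 (sup (dist_gaps A K j))
                         | j in [set: nat]].
  split; first by eexists; exists 0%N.
  by exists 1 => _ [i _ <-]; rewrite ge_min invf_le1 // ler1n.
have : Num.min (j.+1%:R)^-1 (sup (dist_gaps A K j)) < d.
  by apply: le_lt_trans AKd; rewrite dAWE; apply: sup_upper_bound => //; exists j.
rewrite gt_min => /orP[/lt_le_trans/(_ dj)|]; first by rewrite ltxx.
by apply: le_lt_trans; apply: sup_upper_bound => //; exists x.
Qed.

End AttouchWets.

Lemma exists_nat_gt (R : archiDomainType) (x : R) : exists j : nat, x < j.+1%:R.
Proof.
exists (Num.bound `|x|); apply: le_lt_trans (ler_norm x) _.
by apply: lt_le_trans (archi_boundP (normr_ge0 x)) _; rewrite ler_nat.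
Qed.

Section Excess.
Variables (R : realType) (n : nat).
Implicit Types (x y : 'rV[R]_n) (X Y : set 'rV[R]_n).

Definition excess_le X Y (r e : R) :=
  forall x, X x -> enorm x <= r -> exists2 y, Y y & enorm (x - y) <= e.

Lemma excess_leW X Y (r r' e e' : R) :
  excess_le X Y r e -> r' <= r -> e <= e' -> excess_le X Y r' e'.
Proof.
move=> XY rr' ee' x Xx xr'; have [y Yy xy] := XY x Xx (le_trans xr' rr').
by exists y => //; exact: le_trans ee'.
Qed.

Lemma excess_leS X X' Y Y' (r e : R) :
  excess_le X Y r e -> X' `<=` X -> Y `<=` Y' -> excess_le X' Y' r e.
Proof.
move=> XY XX' YY' x X'x xr; have [y Yy xy] := XY x (XX' _ X'x) xr.
by exists y => //; exact: YY'.
Qed.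

(* A near-nearest point [a] of [X] to [x] has [|a| <= |x| + d(x, X) + 1 <= 2 M + 1]
   since [X 0]. *)
Lemma edist_le_of_excess X Y (M e : R) x : X 0 -> Y !=set0 ->
  excess_le X Y (2 * M + 1) e -> enorm x <= M -> edist x Y <= edist x X + e.
Proof.
move=> X0 Y0 XY xM; apply/ler_addgt0Pr => g g0.
have g1 : 0 < Num.min g 1 by rewrite lt_min g0 ltr01.
have [a Xa xa] := edist_approx x (ex_intro _ _ X0) g1.
have [ming min1] : Num.min g 1 <= g /\ Num.min g 1 <= 1.
  by rewrite !ge_min !lexx orbT.
have xX := edist_le_enorm x X0.
have [|y Yy ay] := XY a Xa.
  by have := ler_enorm_distD a x 0; rewrite !subr0 enorm_distC; lra.
apply: le_trans (edist_le x Yy) _.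
by have := ler_enorm_distD x a y; lra.
Qed.

Lemma gap_le_of_excess X Y (M e : R) x : X 0 -> Y 0 ->
  excess_le X Y (2 * M + 1) e -> excess_le Y X (2 * M + 1) e -> enorm x <= M ->
  `|edist x X - edist x Y| <= e.
Proof.
move=> X0 Y0 XY YX xM; rewrite ler_norml.
have := edist_le_of_excess X0 (ex_intro _ _ Y0) XY xM.
have := edist_le_of_excess Y0 (ex_intro _ _ X0) YX xM.
by move=> *; apply/andP; split; lra.
Qed.

Lemma excess_of_gaps X Y (r d : R) : Y !=set0 ->
  (forall x, enorm x <= r -> `|edist x X - edist x Y| < d) ->
  excess_le X Y r (2 * d).
Proof.
move=> Y0 gaps a Xa ar; have := gaps a ar; rewrite edist_eq0 // sub0r normrN.
move=> aY; have d0 : 0 < d by apply: le_lt_trans aY.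
have [y Yy ay] := edist_approx a Y0 d0.
by exists y => //; have := ler_norm (edist a Y); lra.
Qed.

Lemma excess_of_dAW (r : R) : exists2 d0 : R, 0 < d0 &
  forall X Y (d : R), X 0 -> Y 0 -> d <= d0 -> dAW X Y < d ->
  excess_le X Y r (2 * d) /\ excess_le Y X r (2 * d).
Proof.
have [j rj] := exists_nat_gt r.
exists (j.+1%:R)^-1 => [|X Y d X0 Y0 dj XYd]; first by rewrite invr_gt0.
have gapsXY x : enorm x <= r -> `|edist x X - edist x Y| < d.
  by move=> xr; apply: (gap_lt_of_dAW (j := j)) => //; exact: le_lt_trans xr rj.
split; apply: excess_of_gaps; [by exists 0 | exact: gapsXY | by exists 0 |].
by move=> x xr; rewrite distrC; exact: gapsXY.
Qed.

Lemma dAW_lt_of_excess (eps : R) : 0 < eps -> exists2 r : R, 0 <= r &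
  forall X Y (e : R), X 0 -> Y 0 -> e < eps ->
  excess_le X Y r e -> excess_le Y X r e -> dAW X Y < eps.
Proof.
move=> eps0; have [J epsJ] := exists_nat_gt eps^-1.
exists (2 * J.+1%:R + 1) => [|X Y e X0 Y0 e_eps XY YX]; first by [].
apply: (dAW_lt_of_gaps (J := J) _ e_eps) => [|x xJ].
  by rewrite -[eps]invrK ltf_pV2 ?posrE ?invr_gt0.
exact: gap_le_of_excess X0 Y0 XY YX (ltW xJ).
Qed.

End Excess.

Section PsiExcess.
Variables (R : realType) (n : nat).
Implicit Types (x z : 'rV[R]_n) (A B C : set 'rV[R]_n).

(* Radial retraction [d |-> (r / |d|) d]: it stays in [C] by convexity and
   [C 0], and moves [d] by [|d| - r], which is small when [z] is close to [d]. *)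
Lemma retract_into_cball C z d (r k : R) : convexset C -> C 0 -> C d ->
  0 <= r -> 0 <= k -> enorm z <= r + k ->
  exists2 d', (C `&` cball r) d' & enorm (z - d') <= 2 * enorm (z - d) + k.
Proof.
move=> cvC C0 Cd r0 k0 zr.
have dz := ler_enorm_distD d z 0; rewrite !subr0 enorm_distC in dz.
have [dr|rd] := leP (enorm d) r.
  by exists d => //; have := enorm_ge0 (z - d); lra.
have d0 : 0 < enorm d by apply: le_lt_trans rd.
pose l := r / enorm d.
have l01 : 0 <= l <= 1 by rewrite divr_ge0 ?enorm_ge0 //= ler_pdivrMr // mul1r ltW.
exists (l *: d); first split.
- by have := cvC d 0 l Cd C0 l01; rewrite scaler0 addr0.
- by rewrite /cball /= enormZ ger0_norm ?divfK ?lt0r_neq0 //; case/andP: l01.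
have dl : enorm (d - l *: d) = enorm d - r.
  rewrite -{1}(scale1r d) -scalerBl enormZ ger0_norm; last by case/andP: l01 => _; rewrite subr_ge0.
  by rewrite mulrBl mul1r divfK ?lt0r_neq0.
by have := ler_enorm_distD z d (l *: d); rewrite dl; lra.
Qed.

Lemma excess_msum_cball A B (t s rho e : R) : 0 < t -> 0 <= s ->
  excess_le A B (rho + t) e ->
  excess_le (msum A (cball t)) (msum B (cball s)) rho (e + `|t - s|).
Proof.
move=> t0 s0 AB _ [a [Aa [b [bt ->]]]] abr; rewrite /cball /= in bt.
have [|a' Ba' aa'] := AB a Aa.
  have := ler_enorm_distD a (a + b) 0; rewrite !subr0 opprD addrA subrr sub0r enormN.
  lra.
have st0 : 0 <= s / t by rewrite divr_ge0 // ltW.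
exists (a' + (s / t) *: b).
  exists a'; split => //; exists ((s / t) *: b); split => //.
  rewrite /cball /= enormZ ger0_norm //; apply: le_trans (ler_wpM2l st0 bt) _.
  by rewrite divfK ?lt0r_neq0.
rewrite opprD addrACA; apply: le_trans (ler_enormD _ _) _; apply: lerD => //.
rewrite -{1}(scale1r b) -scalerBl enormZ.
have -> : 1 - s / t = (t - s) / t by field; rewrite lt0r_neq0.
rewrite normrM normfV (gtr0_norm t0) mulrAC ler_pdivrMr //.
exact: ler_wpM2l.
Qed.

Lemma excess_psi A B (t s rho e k : R) : 0 < t <= 1 -> 0 < s <= 1 ->
  convexset B -> B 0 -> 0 <= k -> (1 - t) / t - (1 - s) / s <= k ->
  excess_le A B (rho + 1) e ->
  excess_le (psi A t) (psi B s) rho (2 * (e + `|t - s|) + k).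
Proof.
move=> /andP[t0 t1] /andP[s0 s1] cvB B0 k0 tsk AB.
rewrite !psi_pos // => x [Ax xt] xrho.
have rs0 : 0 <= (1 - s) / s by rewrite divr_ge0 ?subr_ge0 // ltW.
have ABt : excess_le A B (rho + t) e by apply: (excess_leW AB) => //; rewrite lerD2l.
have [d Cd xd] := excess_msum_cball t0 (ltW s0) ABt Ax xrho.
have cvC : convexset (msum B (cball s)).
  by apply: convex_msum => //; exact: convex_cball.
have C0 : msum B (cball s) 0.
  by exists 0; split => //; exists 0; split; [exact: cball0 (ltW s0) | rewrite addr0].
have xr : enorm x <= (1 - s) / s + k by rewrite /cball /= in xt; lra.
have [d' Cd' xd'] := retract_into_cball cvC C0 Cd rs0 k0 xr.
by exists d' => //; lra.
Qed.

End PsiExcess.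

Section PsiNearZero.
Variables (R : realType) (n : nat).
Implicit Types (A B : set 'rV[R]_n).

Lemma excess_into_psi A B (s rho e : R) : 0 <= s <= 1 ->
  s * (rho + e) <= 1 - s -> excess_le A B rho e -> excess_le A (psi B s) rho e.
Proof.
move=> /andP[s0 s1] s_small AB; have [->|s_neq0] := eqVneq s 0; first by rewrite psi0.
have sp : 0 < s by rewrite lt_def s_neq0.
rewrite psi_pos // => x Ax xrho; have [y By xy] := AB x Ax xrho.
exists y => //; split.
  by exists y; split => //; exists 0; split; [exact: cball0 | rewrite addr0].
rewrite /cball /= ler_pdivlMr // mulrC.
have := ler_enorm_distD y x 0; rewrite !subr0 enorm_distC => yx.
by apply: le_trans s_small; rewrite ler_pM2l //; lra.
Qed.

Lemma excess_from_psi A B (s rho e : R) : 0 <= s <= 1 ->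
  excess_le B A (rho + 1) e -> excess_le (psi B s) A rho (e + s).
Proof.
move=> /andP[s0 s1] BA; have [->|s_neq0] := eqVneq s 0.
  by rewrite psi0 addr0; apply: (excess_leW BA) => //; rewrite lerDl.
have sp : 0 < s by rewrite lt_def s_neq0.
have BAs : excess_le B A (rho + s) e by apply: (excess_leW BA) => //; rewrite lerD2l.
have := excess_msum_cball sp (lexx 0) BAs; rewrite subr0 (gtr0_norm sp) => BA'.
rewrite psi_pos //; apply: (excess_leS BA'); first exact: subIsetl.
move=> _ [a [Aa [c [c0 ->]]]]; rewrite /cball /= in c0.
have /enorm_eq0 -> : enorm c = 0 by apply/eqP; rewrite eq_le c0 enorm_ge0.
by rewrite addr0.
Qed.

End PsiNearZero.

Lemma ratio_dist_le (R : realFieldType) (t s : R) : 0 < t -> t / 2 < s ->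
  `|(1 - t) / t - (1 - s) / s| <= 2 * `|t - s| / t ^+ 2.
Proof.
move=> t0 ts; have s0 : 0 < s by apply: le_lt_trans ts; rewrite divr_ge0 // ltW.
have -> : (1 - t) / t - (1 - s) / s = (s - t) / (t * s).
  by field; rewrite !lt0r_neq0.
rewrite normrM normfV (gtr0_norm (mulr_gt0 t0 s0)) distrC ler_pdivrMr ?mulr_gt0 //.
have -> : 2 * `|t - s| / t ^+ 2 * (t * s) = `|t - s| * (2 * s / t).
  by field; rewrite lt0r_neq0.
by rewrite ler_peMr // ler_pdivlMr // mul1r; lra.
Qed.

Lemma ratio_le_of_ge_golden (R : rcfType) (t : R) :
  (Num.sqrt 5 - 1) / 2 <= t -> 0 < t /\ (1 - t) / t <= t.
Proof.
move=> tg; have s5 : Num.sqrt 5 ^+ 2 = 5 :> R by rewrite sqr_sqrtr.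
have s1 : 1 < Num.sqrt 5 :> R.
  by rewrite -(ltr_pXn2r (n:=2)) ?nnegrE ?sqrtr_ge0 // s5 expr1n; lra.
have t0 : 0 < t by apply: lt_le_trans tg; lra.
split => //; rewrite ler_pdivrMr //.
have : 0 <= (t - (Num.sqrt 5 - 1) / 2) * (t + (Num.sqrt 5 + 1) / 2).
  by rewrite mulr_ge0 // ?subr_ge0 //; lra.
by nra.
Qed.

Section PsiContinuity.
Variables (R : realType) (n : nat).
Implicit Types (A B : set 'rV[R]_n).

Definition psi_continuous_at A (t : R) := forall eps : R, 0 < eps ->
  exists2 delta : R, 0 < delta & forall B (s : R), K0 B -> 0 <= s <= 1 ->
    dAW A B < delta -> `|t - s| < delta -> dAW (psi A t) (psi B s) < eps.

Lemma psi_continuous_at0 A : K0 A -> psi_continuous_at A 0.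
Proof.
move=> [_ [_ A0]] eps eps0.
have [rho rho0 dAW_small] := dAW_lt_of_excess n eps0.
have [d0 d00 excess_small] := @excess_of_dAW R n (rho + 1).
pose delta := Num.min d0 (Num.min (eps / 6) (rho + 2)^-1).
have rho2 : 0 < rho + 2 by lra.
have delta_d0 : delta <= d0 by rewrite ge_min lexx.
have delta_eps : delta <= eps / 6 by rewrite !ge_min lexx orbT.
have delta_rho : delta * (rho + 2) <= 1.
  by rewrite -ler_pdivlMr // mul1r !ge_min lexx !orbT.
exists delta => [|B s KB /andP[s0 s1] ABd].
  by rewrite !lt_min d00 invr_gt0 rho2 divr_gt0.
rewrite sub0r normrN ger0_norm // psi0 => s_delta.
have [_ [_ B0]] := KB; have [AB BA] := excess_small A B delta A0 B0 delta_d0 ABd.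
have [_ [_ psiB0]] := K0_psi KB (introT andP (conj s0 s1)).
have A_psiB : excess_le A (psi B s) rho (2 * delta).
  apply: excess_into_psi; [by rewrite s0 | nra |].
  by apply: (excess_leW AB) => //; lra.
have psiB_A : excess_le (psi B s) A rho (2 * delta + s).
  by apply: excess_from_psi => //; rewrite s0.
apply: (dAW_small _ _ (3 * delta) A0 psiB0); first lra.
  by apply: (excess_leW A_psiB) => //; lra.
by apply: (excess_leW psiB_A) => //; lra.
Qed.


Lemma psi_continuous_at_pos A t : K0 A -> 0 < t <= 1 -> psi_continuous_at A t.
Proof.
move=> KA /andP[t0 t1] eps eps0; have [_ [cvA A0]] := KA.
have [rho rho0 dAW_small] := dAW_lt_of_excess n eps0.
have [d0 d00 excess_small] := @excess_of_dAW R n (rho + 1).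
have t20 : 0 < t ^+ 2 by rewrite exprn_gt0.
pose delta := Num.min d0 (Num.min (t / 2) (eps * t ^+ 2 / 16)).
have delta0 : 0 < delta by rewrite !lt_min d00 !divr_gt0 ?mulr_gt0.
have delta_d0 : delta <= d0 by rewrite ge_min lexx.
have delta_t : delta <= t / 2 by rewrite !ge_min lexx orbT.
have delta_eps : delta / t ^+ 2 <= eps / 16.
  by rewrite ler_pdivrMr // mulrAC !ge_min lexx !orbT.
have delta_t2 : delta <= delta / t ^+ 2.
  by rewrite ler_pdivlMr // -[leRHS]mulr1 ler_pM2l // expr_le1 // ltW.
clearbody delta; exists delta => // B s KB /andP[s0 s1] ABd ts_delta.
have [_ [cvB B0]] := KB; have [AB BA] := excess_small A B delta A0 B0 delta_d0 ABd.
have ts2 : t / 2 < s by have := ler_norm (t - s); lra.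
have sp : 0 < s by apply: le_lt_trans ts2; rewrite divr_ge0 // ltW.
have k_ge : `|(1 - t) / t - (1 - s) / s| <= 2 * (delta / t ^+ 2).
  apply: le_trans (ratio_dist_le t0 ts2) _.
  by rewrite -mulrA ler_pM2l // ler_pM2r ?invr_gt0 // ltW.
have k0 : 0 <= 2 * (delta / t ^+ 2) by rewrite mulr_ge0 // divr_ge0 // ltW.
have t01 : 0 < t <= 1 by rewrite t0 t1.
have s01 : 0 < s <= 1 by rewrite sp s1.
have psiAB := excess_psi t01 s01 cvB B0 k0 (le_trans (ler_norm _) k_ge) AB.
rewrite distrC in k_ge.
have psiBA := excess_psi s01 t01 cvA A0 k0 (le_trans (ler_norm _) k_ge) BA.
have [_ [_ psiA0]] := K0_psi KA (introT andP (conj (ltW t0) t1)).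
have [_ [_ psiB0]] := K0_psi KB (introT andP (conj s0 s1)).
apply: (dAW_small _ _ (8 * (delta / t ^+ 2)) psiA0 psiB0); first lra.
  by apply: (excess_leW psiAB) => //; lra.
by apply: (excess_leW psiBA) => //; rewrite distrC; lra.
Qed.

End PsiContinuity.

Theorem lemma4p1 (R : realType) (n : nat) (hn : (1 < n)%N) :
  (* psi maps K_0^n x [0,1] into K_0^n *)
  (forall (A : set 'rV[R]_n) (t : R), K0 A -> 0 <= t <= 1 -> K0 (psi A t)) /\
  (* psi is continuous for d_AW (product topology on K_0^n x [0,1]) *)
  (forall (A : set 'rV[R]_n) (t : R), K0 A -> 0 <= t <= 1 ->
     forall eps : R, 0 < eps -> exists2 delta : R, 0 < delta &
       forall (B : set 'rV[R]_n) (s : R), K0 B -> 0 <= s <= 1 ->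
         dAW A B < delta -> `|t - s| < delta ->
         dAW (psi A t) (psi B s) < eps) /\
  (* for t in [(sqrt 5 - 1)/2, 1), psi(A,t) = ((1-t)/t) B *)
  (forall (A : set 'rV[R]_n) (t : R), K0 A ->
     (Num.sqrt 5 - 1) / 2 <= t < 1 ->
     psi A t = sscale ((1 - t) / t) (@eball R n)).
Proof.
split; [exact: K0_psi | split].
- move=> A t KA /andP[t0 t1]; have [->|t_neq0] := eqVneq t 0.
    exact: psi_continuous_at0.
  by apply: psi_continuous_at_pos; rewrite // lt_def t_neq0 t0.
- move=> A t [_ [_ A0]] /andP[t_golden t1]; have [t0 rt] := ratio_le_of_ge_golden t_golden.
  rewrite (psi_eq_cball A0 t0 (ltW t1) rt) sscale_eball //.
  by rewrite divr_ge0 ?subr_ge0 // ltW.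
Qed.
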